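(* Let $S$ be a periodic semigroup with apartness satisfying assumption (CD$_S$). Then $\tilde{\mathcal D}=\tilde{\mathcal J}$.
   Context: Constructive (intuitionistic) mathematics. A semigroup with apartness is a semigroup with an apartness relation $\#$ (irreflexive, symmetric, cotransitive: $x\#z\Rightarrow(x\#y\vee y\#z)$) such that $xy\#zw\Rightarrow(x\#z\vee y\#w)$. $S$ is periodic if for each $a\in S$ there are positive integers $m,r$ with $a^{m+r}=a^m$. $S^1=S\sqcup\{1\}$, $1$ an identity, $1\#s$ for all $s\in S$. $a\succ_l b\Leftrightarrow\forall_{s\in S^1}(a\#sb)$; $a\succ_r b\Leftrightarrow\forall_{s\in S^1}(a\#bs)$; $a\succ_j b\Leftrightarrow\forall_{s,t\in S^1}(a\#sbt)$. $\tilde{\mathcal L}=(\succ_l)\cup(\succ_l)^{-1}$, $\tilde{\mathcal R}=(\succ_r)\cup(\succ_r)^{-1}$, $\tilde{\mathcal J}=(\succ_j)\cup(\succ_j)^{-1}$, and $\tilde{\mathcal D}=\tilde{\mathcal L}*\tilde{\mathcal R}$ where $\alpha*\beta=\{(x,y)\mid\forall_{z\in S}(x\alpha z\vee z\beta y)\}$. Assumption (CD$_S$): for every predicate $P(x)$ of the form $u(x)\#v$ or $\forall_s(u(s,x)\#v)$ ($u,v$ terms built by multiplication from variables and elements of $S^1$, $x$ not occurring in $v$), and every $Q$ of the form $u\#v$, $\forall_s(u(s)\#v)$ or $\forall_{s,t}(u(s,t)\#v)$ ($x$ not occurring in $u,v$; $s,t$ not in $v$), the implication $\forall_x(P(x)\vee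 Q)\Rightarrow(\forall_xP(x))\vee Q$ holds. *)

Set Implicit Arguments.

(** Semigroup with apartness. Equality is Leibniz equality on the carrier. *)
Record apSemigroup := {
  car :> Type;
  mul : car -> car -> car;
  ap : car -> car -> Prop;
  mulA : forall x y z, mul x (mul y z) = mul (mul x y) z;
  ap_irr : forall x, ~ ap x x;
  ap_sym : forall x y, ap x y -> ap y x;
  ap_cot : forall x y z, ap x z -> ap x y \/ ap y z;
  ap_mul : forall x y z w, ap (mul x y) (mul z w) -> ap x z \/ ap y w
}.

Section Defs.
Variable G : apSemigroup.

(** a^n for n >= 1 (the value at n = 0 is an irrelevant dummy). *)
Fixpoint spow (a : G) (n : nat) : G :=
  match n with
  | O => a
  | S k => match k with O => a | _ => mul G (spow a k) a end
  end.

Definition periodic : Prop :=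
  forall a : G, exists m r : nat, 0 < m /\ 0 < r /\ spow a (m + r) = spow a m.

(** S^1 = S + {1}, represented as option G with None = 1. *)
Definition S1 := option G.

Definition mul1 (x y : S1) : S1 :=
  match x, y with
  | None, _ => y
  | _, None => x
  | Some a, Some b => Some (mul G a b)
  end.

Definition ap1 (x y : S1) : Prop :=
  match x, y with
  | Some a, Some b => ap G a b
  | None, None => False
  | _, _ => True
  end.

Definition lmul (s : S1) (b : G) : G :=
  match s with None => b | Some c => mul G c b end.
Definition rmul (b : G) (s : S1) : G :=
  match s with None => b | Some c => mul G b c end.

Definition succ_l (a b : G) : Prop := forall s : S1, ap G a (lmul s b).
Definition succ_r (a b : G) : Prop := forall s : S1, ap G a (rmul b s).
Definition succ_j (a b : G) : Prop :=
  forall s t : S1, ap G a (rmul (lmul s b) t).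

Definition Lt (x y : G) : Prop := succ_l x y \/ succ_l y x.
Definition Rt (x y : G) : Prop := succ_r x y \/ succ_r y x.
Definition Jt (x y : G) : Prop := succ_j x y \/ succ_j y x.

Definition rstar (alpha beta : G -> G -> Prop) (x y : G) : Prop :=
  forall z : G, alpha x z \/ beta z y.

Definition Dt : G -> G -> Prop := rstar Lt Rt.

Inductive term (V : Type) : Type :=
  | TVar : V -> term V
  | TConst : S1 -> term V
  | TMul : term V -> term V -> term V.

Fixpoint teval (V : Type) (env : V -> S1) (u : term V) : S1 :=
  match u with
  | TVar v => env v
  | TConst _ c => c
  | TMul u1 u2 => mul1 (teval env u1) (teval env u2)
  end.

Definition noenv (e : Empty_set) : S1 := match e with end.

(** Shapes of P(x):
    - PAp u v     : u(x) # v            (v does not contain x)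
    - PAll u v    : forall s, u(s,x) # v(s)   (v does not contain x)
    In PAll, the variable [true] of u is s and [false] is x. *)
Inductive Pshape : Type :=
  | PAp : term unit -> term Empty_set -> Pshape
  | PAll : term bool -> term unit -> Pshape.

Definition Pden (p : Pshape) (x : G) : Prop :=
  match p with
  | PAp u v => ap1 (teval (fun _ => Some x) u) (teval noenv v)
  | PAll u v => forall s : S1,
      ap1 (teval (fun b : bool => if b then s else Some x) u)
          (teval (fun _ => s) v)
  end.

(** Shapes of Q (x does not occur; s, t do not occur in v):
    - QAp u v   : u # v
    - QAll1 u v : forall s, u(s) # v
    - QAll2 u v : forall s t, u(s,t) # v   ([true] is s, [false] is t) *)
Inductive Qshape : Type :=
  | QAp : term Empty_set -> term Empty_set -> Qshape
  | QAll1 : term unit -> term Empty_set -> Qshape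
  | QAll2 : term bool -> term Empty_set -> Qshape.

Definition Qden (q : Qshape) : Prop :=
  match q with
  | QAp u v => ap1 (teval noenv u) (teval noenv v)
  | QAll1 u v => forall s : S1, ap1 (teval (fun _ => s) u) (teval noenv v)
  | QAll2 u v => forall s t : S1,
      ap1 (teval (fun b : bool => if b then s else t) u) (teval noenv v)
  end.

Definition CD : Prop :=
  forall (p : Pshape) (q : Qshape),
    (forall x : G, Pden p x \/ Qden q) -> (forall x : G, Pden p x) \/ Qden q.

End Defs.

(* Both inclusions reduce, via (CD_S), to a statement with all quantifiers
   over S^1 in front:
   - x D~ y implies: for all s,t,s',t' in S^1, x # syt or y # s'xt'.  Put
     a = ss', b = t't and choose k with a^k = E, b^k = F idempotent
     (periodicity).  From x D~ s'x one derives x # ExF, and by induction on n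
     (cotransitivity and cancellation) x # a^n x b^n yields the disjunction.
   - x >_j y implies: for all z, s, t, x # sz or z # yt (cotransitivity),
     and symmetrically for y >_j x.
   (CD_S) then moves the quantifiers over S^1 inside the disjunctions; four
   applications give x J~ y, two give x L~ z or z R~ y. *)
From Stdlib Require Import PeanoNat Lia.

Set Implicit Arguments.
Unset Strict Implicit.

Arguments mul1 {G}.
Arguments ap1 {G}.

Local Notation "u ** v" := (mul1 u v) (at level 40, left associativity).
Local Notation "u # v" := (ap1 u v) (at level 70, no associativity).

Section MonoidWithApartness.
Variable G : apSemigroup.
Implicit Types (u v w z e f X Y : S1 G) (b x y : G).

Lemma mul1A u v w : u ** (v ** w) = u ** v ** w.
Proof. destruct u, v, w; simpl; rewrite ?mulA; reflexivity. Qed.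

Lemma mul1_1r u : u ** None = u.
Proof. destruct u; reflexivity. Qed.

Lemma ap1_irrefl u : ~ u # u.
Proof. destruct u; simpl; auto using ap_irr. Qed.

Lemma ap1_sym u v : u # v -> v # u.
Proof. destruct u, v; simpl; auto using ap_sym. Qed.

Lemma ap1_cotrans u v w : u # w -> u # v \/ v # w.
Proof. destruct u, v, w; simpl; auto using ap_cot. Qed.

Lemma ap1_mul u v w z : u ** v # w ** z -> u # w \/ v # z.
Proof. destruct u, v, w, z; simpl; auto using ap_mul; tauto. Qed.

(* Multiplication is strongly extensional, hence apartness cancels. *)
Lemma ap1_cancel_l e u v : e ** u # e ** v -> u # v.
Proof.
  intro H; destruct (ap1_mul H) as [He|]; [destruct (ap1_irrefl He)|assumption].
Qed.

Lemma ap1_cancel_r e u v : u ** e # v ** e -> u # v.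
Proof.
  intro H; destruct (ap1_mul H) as [|He]; [assumption|destruct (ap1_irrefl He)].
Qed.

Lemma Some_lmul u b : Some (lmul u b) = u ** Some b.
Proof. destruct u; reflexivity. Qed.

Lemma Some_rmul b u : Some (rmul b u) = Some b ** u.
Proof. destruct u; reflexivity. Qed.

Lemma ap_lmul x u y : ap G x (lmul u y) <-> Some x # u ** Some y.
Proof. rewrite <- Some_lmul; reflexivity. Qed.

Lemma ap_rmul x y u : ap G x (rmul y u) <-> Some x # Some y ** u.
Proof. rewrite <- Some_rmul; reflexivity. Qed.

Lemma ap_sandwich x u y v :
  ap G x (rmul (lmul u y) v) <-> Some x # u ** Some y ** v.
Proof. rewrite <- Some_lmul, <- Some_rmul; reflexivity. Qed.

Fixpoint pw u (n : nat) : S1 G :=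
  match n with O => None | S k => pw u k ** u end.

Lemma pw_add u i j : pw u (i + j) = pw u i ** pw u j.
Proof.
  induction j as [|j IH]; simpl.
  - rewrite Nat.add_0_r, mul1_1r; reflexivity.
  - rewrite Nat.add_succ_r; simpl; rewrite IH, mul1A; reflexivity.
Qed.

Lemma pw_succ_l u n : pw u (S n) = u ** pw u n.
Proof. exact (pw_add u 1 n). Qed.

Lemma pw_spow x n : pw (Some x) (S n) = Some (spow G x (S n)).
Proof.
  induction n as [|n IH]; [reflexivity|].
  change (pw (Some x) (S (S n))) with (pw (Some x) (S n) ** Some x).
  rewrite IH; reflexivity.
Qed.

Lemma periodic_pw : periodic G -> forall u,
  exists m r, 0 < m /\ 0 < r /\ forall n j, m <= n -> pw u (n + j * r) = pw u n.
Proof.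
  intros P [x|].
  - destruct (P x) as (m & r & Hm & Hr & E).
    exists m, r; repeat split; try assumption.
    assert (Eone : pw (Some x) (m + r) = pw (Some x) m).
    { destruct m as [|m]; [lia|]. rewrite Nat.add_succ_l, !pw_spow, <- Nat.add_succ_l, E.
      reflexivity. }
    intros n j Hn. induction j as [|j IH]; simpl; [rewrite Nat.add_0_r; reflexivity|].
    replace (n + (r + j * r)) with ((m + r) + ((n - m) + j * r)) by lia.
    rewrite pw_add, Eone, <- pw_add.
    replace (m + (n - m + j * r)) with (n + j * r) by lia. exact IH.
  - assert (One : forall n, pw None n = None) by (induction n as [|n IH]; simpl; rewrite ?IH; reflexivity).
    exists 1, 1; repeat split; auto. intros; rewrite !One; reflexivity.
Qed.

(* Any two elements of S^1 have a common exponent k > 0 making both powers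
   idempotent: a multiple of both periods beyond both indices. *)
Lemma common_idempotent_power : periodic G -> forall u v, exists k, 0 < k /\
  pw u k ** pw u k = pw u k /\ pw v k ** pw v k = pw v k.
Proof.
  intros P u v.
  destruct (periodic_pw P u) as (m1 & r1 & Hm1 & Hr1 & Eu).
  destruct (periodic_pw P v) as (m2 & r2 & Hm2 & Hr2 & Ev).
  set (k := m1 * r1 * m2 * r2).
  assert (Hk : 0 < k /\ m1 <= k /\ m2 <= k).
  { unfold k. assert (0 < m1 * r1) by lia. assert (0 < m1 * r1 * m2) by nia. nia. }
  destruct Hk as (Hk & Hk1 & Hk2).
  exists k; split; [exact Hk|]; rewrite <- !pw_add; split.
  - replace (k + k) with (k + (m1 * m2 * r2) * r1) by (unfold k; lia). exact (Eu _ _ Hk1).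
  - replace (k + k) with (k + (m1 * m2 * r1) * r2) by (unfold k; lia). exact (Ev _ _ Hk2).
Qed.

Lemma ap_conjugate_power X Y s t s' t' n :
  X # pw (s ** s') n ** X ** pw (t' ** t) n ->
  X # s ** Y ** t \/ Y # s' ** X ** t'.
Proof.
  induction n as [|n IH]; intro H.
  - simpl in H; rewrite mul1_1r in H; destruct (ap1_irrefl H).
  - set (A := pw (s ** s') n) in *; set (B := pw (t' ** t) n) in *.
    change (pw (s ** s') (S n)) with (A ** (s ** s')) in H; rewrite pw_succ_l in H; fold B in H.
    destruct (ap1_cotrans (A ** X ** B) H) as [H1|H1]; [exact (IH H1)|].
    assert (Hstep : X # s ** s' ** X ** (t' ** t)).
    { replace (A ** (s ** s') ** X ** (t' ** t ** B)) with (A ** (s ** s' ** X ** (t' ** t)) ** B) in H1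
        by (rewrite !mul1A; reflexivity).
      exact (ap1_cancel_l (ap1_cancel_r H1)). }
    destruct (ap1_cotrans (s ** Y ** t) Hstep) as [H2|H2]; [now left|right].
    replace (s ** s' ** X ** (t' ** t)) with (s ** (s' ** X ** t') ** t) in H2 by (rewrite !mul1A; reflexivity).
    exact (ap1_cancel_l (ap1_cancel_r H2)).
Qed.

Lemma ap_idempotent_l X e f : e ** e = e -> X # e ** X -> X # e ** X ** f.
Proof.
  intros Ie H. destruct (ap1_cotrans (e ** X ** f) H) as [|H1]; [assumption|].
  replace (e ** X ** f) with (e ** (e ** X ** f)) in H1 by (rewrite !mul1A, Ie; reflexivity).
  exact (ap1_sym (ap1_cancel_l H1)).
Qed.

Lemma ap_idempotent_r X e f : f ** f = f -> X # X ** f -> X # e ** X ** f.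
Proof.
  intros If H. destruct (ap1_cotrans (e ** X ** f) H) as [|H1]; [assumption|].
  replace (e ** X ** f) with (e ** X ** f ** f) in H1 by (rewrite <- mul1A, If; reflexivity).
  exact (ap1_sym (ap1_cancel_r H1)).
Qed.

End MonoidWithApartness.

Section CDForms.
Variable G : apSemigroup.
Hypothesis cdG : CD G.

(* (CD_S) quantifies over x in S; the extra value x = 1 of S^1 is covered by
   the hypothesis at 1. *)
Lemma cd_over_S1 (p : Pshape G) (q : Qshape G) (A : S1 G -> Prop) (Q : Prop) :
  (forall x, Pden p x <-> A (Some x)) -> (Qden q <-> Q) ->
  (forall u, A u \/ Q) -> (forall u, A u) \/ Q.
Proof.
  intros Hp Hq H.
  assert (HS : forall x, Pden p x \/ Qden q).
  { intro x; destruct (H (Some x)); [left; apply Hp | right; apply Hq]; assumption. }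
  destruct (cdG HS) as [K|K].
  - destruct (H None) as [H0|H0]; [left|right; exact H0].
    intros [x|]; [apply Hp, K | exact H0].
  - right; apply Hq, K.
Qed.

Definition P_right (c d : G) : Pshape G :=
  PAp (TMul (TConst _ (Some d)) (TVar G tt)) (TConst _ (Some c)).
Definition P_left (a b : G) : Pshape G :=
  PAp (TMul (TVar G tt) (TConst _ (Some b))) (TConst _ (Some a)).
Definition P_left_all (c d : G) : Pshape G :=
  PAll (TMul (TMul (TVar G false) (TConst _ (Some d))) (TVar G true)) (TConst _ (Some c)).

Definition Q_point (a b : G) : Qshape G := QAp (TConst _ (Some a)) (TConst _ (Some b)).
Definition Q_right (c d : G) : Qshape G :=
  QAll1 (TMul (TConst _ (Some d)) (TVar G tt)) (TConst _ (Some c)).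
Definition Q_join (c d : G) : Qshape G :=
  QAll2 (TMul (TMul (TVar G true) (TConst _ (Some d))) (TVar G false)) (TConst _ (Some c)).

Lemma Q_point_den a b : Qden (Q_point a b) <-> ap G a b.
Proof. reflexivity. Qed.

Lemma Q_right_den c d : Qden (Q_right c d) <-> succ_r G c d.
Proof.
  split; intros H t.
  - apply ap_rmul, ap1_sym, (H t).
  - apply ap1_sym, ap_rmul, (H t).
Qed.

Lemma Q_join_den c d : Qden (Q_join c d) <-> succ_j G c d.
Proof.
  split; intros H s t.
  - apply ap_sandwich, ap1_sym, (H s t).
  - apply ap1_sym, ap_sandwich, (H s t).
Qed.

Lemma P_right_den c d x : Pden (P_right c d) x <-> ap G c (rmul d (Some x)).
Proof. split; apply ap_sym. Qed.

Lemma P_left_den a b x : Pden (P_left a b) x <-> ap G a (lmul (Some x) b).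
Proof. split; apply ap_sym. Qed.

Lemma P_left_all_den c d x :
  Pden (P_left_all c d) x <-> forall t, ap G c (rmul (lmul (Some x) d) t).
Proof.
  split; intros H t.
  - apply ap_sandwich, ap1_sym, (H t).
  - apply ap1_sym, ap_sandwich, (H t).
Qed.

Lemma cd_right c d (q : Qshape G) (Q : Prop) : (Qden q <-> Q) ->
  (forall t, ap G c (rmul d t) \/ Q) -> succ_r G c d \/ Q.
Proof. apply (@cd_over_S1 (P_right c d) q (fun t => ap G c (rmul d t)) Q), P_right_den. Qed.

Lemma cd_left a b (q : Qshape G) (Q : Prop) : (Qden q <-> Q) ->
  (forall s, ap G a (lmul s b) \/ Q) -> succ_l G a b \/ Q.
Proof. apply (@cd_over_S1 (P_left a b) q (fun s => ap G a (lmul s b)) Q), P_left_den. Qed.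

Lemma cd_left_all c d (q : Qshape G) (Q : Prop) : (Qden q <-> Q) ->
  (forall s, (forall t, ap G c (rmul (lmul s d) t)) \/ Q) -> succ_j G c d \/ Q.
Proof.
  apply (@cd_over_S1 (P_left_all c d) q (fun s => forall t, ap G c (rmul (lmul s d) t)) Q).
  exact (P_left_all_den c d).
Qed.

Lemma cd_succ_l_or_r a b c d :
  (forall s t, ap G a (lmul s b) \/ ap G c (rmul d t)) -> succ_l G a b \/ succ_r G c d.
Proof.
  intro H. apply (cd_left (Q_right_den c d)). intro s.
  assert (Hs : succ_r G c d \/ ap G a (lmul s b)).
  { apply (cd_right (Q_point_den a (lmul s b))). intro t; destruct (H s t); tauto. }
  tauto.
Qed.

Lemma cd_Jt x y :
  (forall s t s' t', ap G x (rmul (lmul s y) t) \/ ap G y (rmul (lmul s' x) t')) ->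
  Jt G x y.
Proof.
  intro H.
  assert (Right' : forall s t s', succ_r G y (lmul s' x) \/ ap G x (rmul (lmul s y) t)).
  { intros s t s'; apply (cd_right (Q_point_den _ _)). intro t'; destruct (H s t s' t'); tauto. }
  assert (Left' : forall s t, succ_j G y x \/ ap G x (rmul (lmul s y) t)).
  { intros s t; apply (cd_left_all (Q_point_den _ _)). exact (Right' s t). }
  assert (Right : forall s, succ_r G x (lmul s y) \/ succ_j G y x).
  { intro s; apply (cd_right (Q_join_den y x)). intro t; destruct (Left' s t); tauto. }
  exact (cd_left_all (Q_join_den y x) Right).
Qed.

End CDForms.

Section Inclusions.
Variable G : apSemigroup.
Implicit Types (x y z : G).

Lemma Dt_separates x y : periodic G -> Dt G x y -> forall s t s' t' : S1 G,
  ap G x (rmul (lmul s y) t) \/ ap G y (rmul (lmul s' x) t').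
Proof.
  intros P D s t s' t'. rewrite !ap_sandwich.
  destruct (common_idempotent_power P (s ** s') (t' ** t)) as ([|k] & Hk & IdemE & IdemF); [lia|].
  set (E := pw (s ** s') (S k)) in IdemE; set (F := pw (t' ** t) (S k)) in IdemF.
  assert (Conj : Some x # E ** Some x ** F ->
                 Some x # s ** Some y ** t \/ Some y # s' ** Some x ** t')
    by apply ap_conjugate_power.
  assert (EX : E ** Some x = pw (s ** s') k ** s ** (s' ** Some x))
    by (unfold E; simpl; rewrite !mul1A; reflexivity).
  assert (XF : Some x ** F = Some x ** t' ** (t ** pw (t' ** t) k))
    by (unfold F; rewrite pw_succ_l, !mul1A; reflexivity).
  destruct (D (lmul s' x)) as [[Hl|Hl]|[Hr|Hr]].
  -
    apply Conj, ap_idempotent_l; [exact IdemE|].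
    rewrite EX, <- !Some_lmul. exact (Hl _).
  -
    destruct (ap_irr _ _ (Hl s')).
  -
    assert (H : s' ** Some x # Some y ** (t ** pw (t' ** t) k)).
    { rewrite <- Some_lmul, <- Some_rmul. exact (Hr _). }
    destruct (ap1_cotrans (s' ** Some x ** t' ** (t ** pw (t' ** t) k)) H) as [H1|H1].
    + apply Conj, ap_idempotent_r; [exact IdemF|].
      rewrite XF, <- !mul1A; rewrite <- !mul1A in H1. exact (ap1_cancel_l H1).
    + right. exact (ap1_sym (ap1_cancel_r H1)).
  -
    right. rewrite <- !Some_lmul, <- Some_rmul. exact (Hr t').
Qed.

Lemma Dt_Jt x y : periodic G -> CD G -> Dt G x y -> Jt G x y.
Proof. intros P C D. exact (cd_Jt C (Dt_separates P D)). Qed.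

(* x >_j y separates x from sz or z from yt (cotransitivity of x # syt
   through sz, then cancelling s); symmetrically for y >_j x through zt. *)
Lemma succ_j_separates_l x y z : succ_j G x y ->
  forall s t, ap G x (lmul s z) \/ ap G z (rmul y t).
Proof.
  intros J s t. pose proof (proj1 (ap_sandwich x s y t) (J s t)) as Hxy.
  destruct (ap1_cotrans (s ** Some z) Hxy) as [H|H].
  - left. apply ap_lmul, H.
  - right. apply ap_rmul. rewrite <- mul1A in H. exact (ap1_cancel_l H).
Qed.

Lemma succ_j_separates_r x y z : succ_j G y x ->
  forall s t, ap G z (lmul s x) \/ ap G y (rmul z t).
Proof.
  intros J s t. pose proof (proj1 (ap_sandwich y s x t) (J s t)) as Hyx.
  destruct (ap1_cotrans (Some z ** t) Hyx) as [H|H].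
  - right. apply ap_rmul, H.
  - left. apply ap_lmul, (ap1_cancel_r H).
Qed.

Lemma Jt_Dt x y : CD G -> Jt G x y -> Dt G x y.
Proof.
  intros C [J|J] z; unfold Lt, Rt.
  - destruct (cd_succ_l_or_r C (succ_j_separates_l z J)); tauto.
  - destruct (cd_succ_l_or_r C (succ_j_separates_r z J)); tauto.
Qed.

End Inclusions.

Theorem mainTheorem17 (S : apSemigroup) :
  periodic S -> CD S -> forall x y : S, @Dt S x y <-> @Jt S x y.
Proof.
  intros P C x y. split.
  - exact (Dt_Jt P C).
  - exact (Jt_Dt C).
Qed.
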